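(* In the setting below, let $E$ and $E'$ be two bases of $q$-singular vectors indexed by the same totally ordered set $I$, and define $\Delta_{E,E'}:V^{\overline S}\to V^{\overline S}$ by $\Delta_{E,E'}(x+\bar r)=x+\theta(\delta_{E,E'}(x))+\bar r$ for $x\in V$, $\bar r\in\overline S$. Then $\Delta_{E,E'}$ is a bijective $K$-linear map fixing $\overline S$ elementwise, and $q_E^{\overline S,\overline T}(v)=q_{E'}^{\overline S,\overline T}(\Delta_{E,E'}(v))$ for all $v\in V^{\overline S}$; in particular $q_E^{\overline S,\overline T}$ and $q_{E'}^{\overline S,\overline T}$ are isomorphic.
   Context: Setting: $K$ division ring, $(\sigma,\varepsilon)$ admissible pair ($\sigma$ anti-automorphism, $\varepsilon^\sigma\varepsilon=1$, $t^{\sigma^2}=\varepsilon t\varepsilon^{-1}$). $K_{\sigma,\varepsilon}=\{t-t^\sigma\varepsilon\}$, $\overline K=K/K_{\sigma,\varepsilon}$, $\bar t$ class of $t$, $\bar t\circ\lambda=\overline{\lambda^\sigma t\lambda}$; $\{t:t=-t^\sigma\varepsilon\}/K_{\sigma,\varepsilon}$ is a right $K$-vector space under $\circ$. $q:V\to\overline K/\overline R$ ($V$ right $K$-vector space) is a non-trivial generalized $(\sigma,\varepsilon)$-quadratic form: $\overline R$ is a $\circ$-stable subgroup, $q(x\lambda)=q(x)\circ\lambda$ with $(\bar t+\overline R)\circ\lambda=\bar t\circ\lambda+\overline R$, and a trace-valued $(\sigma,\varepsilon)$-sesquilinear $f$ ($f(x\lambda,y\mu)=\lambda^\sigma f(x,y)\mu$,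 $f(y,x)=f(x,y)^\sigma\varepsilon$, $f(x,x)\in\{t+t^\sigma\varepsilon\}$) satisfies $q(x+y)=q(x)+q(y)+(\overline{f(x,y)}+\overline R)$; $q$ not identically $\overline R$ (then $\overline R$ is a $K$-subspace of the vector space above). $q$-singular: $q(x)=\overline R$. For a basis $E=(e_i)_{i\in I}$ of $q$-singular vectors, $g_E(\sum e_i\lambda_i,\sum e_j\mu_j)=\sum_{i<j}\lambda_i^\sigma f(e_i,e_j)\mu_j$, and $\delta_{E,E'}(x)=\overline{g_E(x,x)}-\overline{g_{E'}(x,x)}\in\overline R$. $\overline R=\overline S\oplus\overline T$ as $K$-vector spaces, $\theta:\overline R\to\overline S$ the projection along $\overline T$. $V^{\overline S}=V\oplus\overline S$ and $q_E^{\overline S,\overline T}(x+\bar r)=\overline{g_E(x,x)}+\bar r+\overline T\in\overline K/\overline T$. *)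

From HB Require Import structures.
From mathcomp Require Import all_boot all_order all_algebra.
From Stdlib Require Import ClassicalEpsilon.
Set Implicit Arguments. Unset Strict Implicit. Unset Printing Implicit Defensive.
Import Order.TTheory GRing.Theory.
Local Open Scope ring_scope.

(* A right K-vector space is modelled as a left module over the converse
   ring K^c; right scalar multiplication  x λ  is  rsc x λ. *)
Definition rsc (K : unitRingType) (V : lmodType K^c) (x : V) (l : K) : V :=
  (l : K^c) *: x.

Definition is_basis (K : unitRingType) (V : lmodType K^c) (I : eqType)
  (E : I -> V) : Prop :=
  (forall v : V, exists (s : seq I) (c : I -> K),
      uniq s /\ v = \sum_(i <- s) rsc (E i) (c i)) /\
  (forall (s : seq I) (c : I -> K), uniq s ->
      \sum_(i <- s) rsc (E i) (c i) = 0 -> forall i, i \in s -> c i = 0).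

Definition coords (K : unitRingType) (V : lmodType K^c) (I : eqType)
  (E : I -> V) (v : V) : seq I * (I -> K) :=
  epsilon (inhabits ([::], fun _ => 0))
    (fun p => uniq p.1 /\ v = \sum_(i <- p.1) rsc (E i) (p.2 i)).

Definition gE (K : unitRingType) (V : lmodType K^c) (d : Order.disp_t)
  (I : orderType d) (sigma : K -> K) (f : V -> V -> K) (E : I -> V)
  (x y : V) : K :=
  let (sx, cx) := coords E x in
  let (sy, cy) := coords E y in
  \sum_(i <- sx) \sum_(j <- sy | (i < j)%O)
     sigma (cx i) * f (E i) (E j) * cy j.

Definition deltaEE (K : unitRingType) (V : lmodType K^c) (d : Order.disp_t)
  (I : orderType d) (sigma : K -> K) (f : V -> V -> K) (Kbar : zmodType)
  (pi : K -> Kbar) (E E' : I -> V) (x : V) : Kbar :=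
  pi (gE sigma f E x x) - pi (gE sigma f E' x x).

(* Elements x + r of V^S = V ⊕ S are pairs (x, r) with r in S.
   Δ_{E,E'}(x + r) = x + θ(δ_{E,E'}(x)) + r. *)
Definition DeltaEE (K : unitRingType) (V : lmodType K^c) (d : Order.disp_t)
  (I : orderType d) (sigma : K -> K) (f : V -> V -> K) (Kbar : zmodType)
  (pi : K -> Kbar) (theta : Kbar -> Kbar) (E E' : I -> V) (p : V * Kbar)
  : V * Kbar :=
  (p.1, theta (deltaEE sigma f pi E E' p.1) + p.2).

(* q_E^{S,T}(x + r) = class(g_E(x,x)) + r + T  in Kbar/T (rhoT = quotient map) *)
Definition qES (K : unitRingType) (V : lmodType K^c) (d : Order.disp_t)
  (I : orderType d) (sigma : K -> K) (f : V -> V -> K) (Kbar : zmodType)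
  (pi : K -> Kbar) (QT : zmodType) (rhoT : Kbar -> QT) (E : I -> V)
  (p : V * Kbar) : QT :=
  rhoT (pi (gE sigma f E p.1 p.1) + p.2).

From Stdlib Require Import ClassicalEpsilon.
From HB Require Import structures.
From mathcomp Require Import all_boot all_order all_algebra.
Import Order.TTheory GRing.Theory.
Set Implicit Arguments. Unset Strict Implicit. Unset Printing Implicit Defensive.
Local Open Scope ring_scope.

(* Let L_E(x) be the class of g_E(x, x) in Kbar.  In coordinates, the cross
   terms of g_E(x + y, x + y) form the strictly upper triangular part of f(x, y);
   the strictly lower triangular part is congruent to it modulo K_{sigma,eps},
   and the diagonal vanishes because the singular vectors of a non-trivial q
   are f-isotropic.  Hence L_E(x + y) = L_E(x) + L_E(y) + class of f(x, y),
   L_E(x lambda) = L_E(x) o lambda, and L_E lifts q.  So delta = L_E - L_E' is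
   K-linear with values in Rbar, theta o delta is K-linear, Delta is a unipotent
   linear automorphism of V + Sbar, and L_E(x) + r and L_E'(x) + theta(delta x) + r
   differ by delta x - theta(delta x), which lies in Tbar. *)

Section AdditiveMaps.

Variables (A B : zmodType) (phi : A -> B).
Hypothesis phiD : forall a b, phi (a + b) = phi a + phi b.

Lemma additive_map0 : phi 0 = 0.
Proof. by apply: (@addrI _ (phi 0)); rewrite -phiD !addr0. Qed.

Lemma additive_mapB a b : phi (a - b) = phi a - phi b.
Proof.
have phiN c : phi (- c) = - phi c.
  by apply: (@addrI _ (phi c)); rewrite -phiD !subrr additive_map0.
by rewrite phiD phiN.
Qed.

Lemma additive_map_sum (J : Type) (r : seq J) (P : pred J) (F : J -> A) :
  phi (\sum_(j <- r | P j) F j) = \sum_(j <- r | P j) phi (F j).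
Proof. exact: (big_morph phi phiD additive_map0). Qed.

End AdditiveMaps.

Lemma subgroupD (M : zmodType) (P : M -> Prop) :
  P 0 -> (forall a b, P a -> P b -> P (a - b)) ->
  forall a b, P a -> P b -> P (a + b).
Proof.
by move=> P0 PB a b Pa Pb; have := PB a (0 - b) Pa (PB 0 b P0 Pb); rewrite sub0r opprK.
Qed.

Lemma big_uniq_support (T : eqType) (M : nmodType) (s u : seq T) (P : pred T)
    (F : T -> M) :
  uniq s -> uniq u -> {subset s <= u} -> (forall i, i \notin s -> F i = 0) ->
  \sum_(i <- u | P i) F i = \sum_(i <- s | P i) F i.
Proof.
move=> us uu su F0; rewrite big_mkcond [RHS]big_mkcond /=.
rewrite (bigID (mem s)) /= [X in _ + X]big1 ?addr0; last by move=> i /F0 ->; case: (P i).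
rewrite -big_filter; apply: perm_big; apply: uniq_perm; rewrite ?filter_uniq //.
by move=> i; rewrite mem_filter; case: (boolP (i \in s)) => // /su ->.
Qed.

Lemma uniq_common_support (T : eqType) (s s' : seq T) :
  exists2 u : seq T, uniq u & {subset s <= u} /\ {subset s' <= u}.
Proof.
exists (undup (s ++ s')); first exact: undup_uniq.
by split=> i i_s; rewrite mem_undup mem_cat i_s ?orbT.
Qed.

Lemma big_ltgt (d : Order.disp_t) (T : orderType d) (M : zmodType) (u : seq T)
    (i : T) (F : T -> M) :
  F i = 0 ->
  \sum_(j <- u) F j = \sum_(j <- u | (i < j)%O) F j + \sum_(j <- u | (j < i)%O) F j.
Proof.
move=> Fi0; rewrite (bigID (fun j => (i < j)%O)) /=; congr (_ + _).
rewrite (bigID (fun j => j == i)) /= big1 ?add0r; last by move=> j /andP[_ /eqP ->].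
by apply: eq_bigl => j; rewrite [RHS]lt_def leNgt andbC eq_sym.
Qed.

Section Coordinates.

Variables (K : unitRingType) (V : lmodType K^c) (I : eqType) (E : I -> V).

Definition lincomb (s : seq I) (c : I -> K) : V := \sum_(i <- s) rsc (E i) (c i).

Definition restrict (s : seq I) (c : I -> K) (i : I) : K := if i \in s then c i else 0.

Lemma lincomb_restrict s u c :
  uniq s -> uniq u -> {subset s <= u} -> lincomb s c = lincomb u (restrict s c).
Proof.
move=> us uu su; rewrite /lincomb (@big_uniq_support _ _ s u) //; last first.
  by move=> i /negbTE i_s; rewrite /restrict i_s /rsc scale0r.
by apply: eq_big_seq => i i_s; rewrite /restrict i_s.
Qed.

Lemma lincombD u a b : lincomb u a + lincomb u b = lincomb u (fun i => a i + b i).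
Proof. by rewrite /lincomb -big_split; apply: eq_bigr => i _; rewrite /rsc scalerDl. Qed.

Lemma lincombZ u c l : rsc (lincomb u c) l = lincomb u (fun i => c i * l).
Proof. by rewrite /rsc /lincomb scaler_sumr; apply: eq_bigr => i _; rewrite scalerA. Qed.

Lemma basis_span x : is_basis E -> exists s c, uniq s /\ x = lincomb s c.
Proof. by case=> span _; exact: span. Qed.

Lemma basis_coord_unique u c c' :
  is_basis E -> uniq u -> lincomb u c = lincomb u c' -> {in u, c =1 c'}.
Proof.
move=> [_ E_free] uu eq_cc' i iu; apply/eqP; rewrite -subr_eq0; apply/eqP.
apply: (E_free u (fun i => c i - c' i)) => //.
under eq_bigr => j _ do rewrite /rsc scalerBl.
by rewrite sumrB; apply/eqP; rewrite subr_eq0; apply/eqP.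
Qed.

End Coordinates.

Section TriangularForm.

Variables (K : unitRingType) (V : lmodType K^c) (d : Order.disp_t) (I : orderType d).
Variables (sigma : K -> K) (f : V -> V -> K) (E : I -> V).
Hypothesis sigmaD : forall a b, sigma (a + b) = sigma a + sigma b.

Definition trisum (s : seq I) (a b : I -> K) : K :=
  \sum_(i <- s) \sum_(j <- s | (i < j)%O) sigma (a i) * f (E i) (E j) * b j.

Lemma trisum_restrict s u c :
  uniq s -> uniq u -> {subset s <= u} ->
  trisum s c c = trisum u (restrict s c) (restrict s c).
Proof.
have sigma0 := additive_map0 sigmaD.
move=> us uu su; rewrite /trisum (@big_uniq_support _ _ s u) //; last first.
  by move=> i /negbTE i_s; apply: big1 => j _; rewrite /restrict i_s sigma0 !mul0r.
apply: eq_big_seq => i i_s; rewrite (@big_uniq_support _ _ s u) //; last first.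
  by move=> j /negbTE j_s; rewrite /restrict j_s mulr0.
rewrite big_seq_cond [RHS]big_seq_cond; apply: eq_bigr => j /andP[j_s _].
by rewrite /restrict i_s j_s.
Qed.

Lemma trisum_lincomb_eq s s' c c' :
  is_basis E -> uniq s -> uniq s' -> lincomb E s c = lincomb E s' c' ->
  trisum s c c = trisum s' c' c'.
Proof.
move=> E_basis us us' eq_cc'.
have [u uu [su su']] := uniq_common_support s s'.
rewrite (trisum_restrict c us uu su) (trisum_restrict c' us' uu su').
have eq_coord : {in u, restrict s c =1 restrict s' c'}.
  apply: (basis_coord_unique E_basis uu).
  by rewrite -(lincomb_restrict E c us uu su) -(lincomb_restrict E c' us' uu su').
rewrite /trisum; apply: eq_big_seq => i iu; rewrite eq_coord //.
rewrite big_seq_cond [RHS]big_seq_cond; apply: eq_bigr => j /andP[ju _].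
by rewrite eq_coord.
Qed.

Lemma gE_lincomb s c :
  is_basis E -> uniq s ->
  gE sigma f E (lincomb E s c) (lincomb E s c) = trisum s c c.
Proof.
move=> E_basis us; rewrite /gE.
have := @epsilon_spec _ (inhabits ([::], fun _ => 0))
  (fun p => uniq p.1 /\ lincomb E s c = \sum_(i <- p.1) rsc (E i) (p.2 i)).
rewrite -/(coords E (lincomb E s c)).
case: (coords E (lincomb E s c)) => s1 c1 /= [|us1 eq1].
  by have [s2 [c2 rep]] := basis_span (lincomb E s c) E_basis; exists (s2, c2).
exact: trisum_lincomb_eq.
Qed.

Lemma trisumD u a b :
  trisum u (fun i => a i + b i) (fun i => a i + b i) =
  trisum u a a + trisum u b b + (trisum u a b + trisum u b a).
Proof.
rewrite /trisum -!big_split /=; apply: eq_bigr => i _.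
rewrite -!big_split /=; apply: eq_bigr => j _.
by rewrite sigmaD !mulrDl !mulrDr [X in _ + X]addrC addrACA.
Qed.

Hypothesis sigmaM : forall a b, sigma (a * b) = sigma b * sigma a.

Lemma trisumZ u c l :
  trisum u (fun i => c i * l) (fun i => c i * l) = sigma l * trisum u c c * l.
Proof.
rewrite /trisum mulr_sumr mulr_suml; apply: eq_bigr => i _.
rewrite mulr_sumr mulr_suml; apply: eq_bigr => j _.
by rewrite sigmaM -!mulrA.
Qed.

Variables (eps : K) (Kbar : zmodType) (pi : K -> Kbar).
Hypotheses (sigma2 : forall t, sigma (sigma t) = eps * t * eps^-1)
  (eps_invl : eps^-1 * eps = 1).
Hypotheses (fDl : forall x y z, f (x + y) z = f x z + f y z)
  (fDr : forall x y z, f x (y + z) = f x y + f x z)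
  (fZ : forall x y l m, f (rsc x l) (rsc y m) = sigma l * f x y * m)
  (f_herm : forall x y, f y x = sigma (f x y) * eps).
Hypotheses (piD : forall a b, pi (a + b) = pi a + pi b)
  (pi_sigma_eps : forall t, pi t = pi (sigma t * eps)).

Lemma f_lincomb u a b :
  f (lincomb E u a) (lincomb E u b) =
  \sum_(i <- u) \sum_(j <- u) sigma (a i) * f (E i) (E j) * b j.
Proof.
rewrite /lincomb (additive_map_sum (phi := fun x => f x _)) //.
apply: eq_bigr => i _; rewrite (additive_map_sum (phi := f _)) //.
by apply: eq_bigr => j _; rewrite fZ.
Qed.

Lemma pi_trisum_polar u a b :
  (forall i, f (E i) (E i) = 0) ->
  pi (trisum u a b + trisum u b a) = pi (f (lincomb E u a) (lincomb E u b)).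
Proof.
move=> fEE; set F := fun i j => sigma (a i) * f (E i) (E j) * b j.
rewrite f_lincomb (eq_bigr (fun i => \sum_(j <- u | (i < j)%O) F i j
   + \sum_(j <- u | (j < i)%O) F i j)); last first.
  by move=> i _; apply: big_ltgt; rewrite /F fEE mulr0 mul0r.
rewrite big_split !piD; congr (_ + _).
under [in RHS]eq_bigr => i _ do rewrite big_mkcond.
rewrite [in RHS]exchange_big !(additive_map_sum piD); apply: eq_bigr => j _.
rewrite big_mkcond !(additive_map_sum piD); apply: eq_bigr => i _.
case: ifP => _; last by rewrite (additive_map0 piD).
(* [F i j] is congruent modulo K_{sigma,eps} to [sigma (F i j) * eps], which is
   the (j, i) term of [trisum u b a]. *)
rewrite [RHS]pi_sigma_eps /F !sigmaM sigma2 -!mulrA eps_invl mulr1.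
by rewrite [sigma (f _ _) * _]mulrA -f_herm mulrA.
Qed.

End TriangularForm.

Section SingularBasis.

Variables (K : unitRingType) (sigma : K -> K) (eps : K).
Variables (Kbar : zmodType) (pi : K -> Kbar) (circ : Kbar -> K -> Kbar).
Variables (Q : zmodType) (rho : Kbar -> Q).
Variables (V : lmodType K^c) (f : V -> V -> K) (q : V -> Q).

Hypothesis K_div : forall x : K, x != 0 -> x \is a GRing.unit.
Hypotheses (sigmaD : forall a b, sigma (a + b) = sigma a + sigma b)
  (sigmaM : forall a b, sigma (a * b) = sigma b * sigma a)
  (sigma1 : sigma 1 = 1)
  (eps_adm : sigma eps * eps = 1)
  (sigma2 : forall t, sigma (sigma t) = eps * t * eps^-1).
Hypotheses (piD : forall a b, pi (a + b) = pi a + pi b)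
  (pi_surj : forall r, exists t, pi t = r)
  (pi_ker : forall t, pi t = 0 <-> exists u, t = u - sigma u * eps).
Hypothesis circE : forall t l, circ (pi t) l = pi (sigma l * t * l).
Hypotheses (rhoD : forall a b, rho (a + b) = rho a + rho b)
  (rho_surj : forall z, exists r, rho r = z).
Hypotheses (fDl : forall x y z, f (x + y) z = f x z + f y z)
  (fDr : forall x y z, f x (y + z) = f x y + f x z)
  (fZ : forall x y l m, f (rsc x l) (rsc y m) = sigma l * f x y * m)
  (f_herm : forall x y, f y x = sigma (f x y) * eps).
Hypotheses (qZ : forall x l r, q x = rho r -> q (rsc x l) = rho (circ r l))
  (qD : forall x y, q (x + y) = q x + q y + rho (pi (f x y)))
  (q_nontriv : exists x, q x <> 0).

Lemma eps_invl : eps^-1 * eps = 1.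
Proof.
apply/mulVr/K_div/eqP => eps0.
by move: eps_adm; rewrite eps0 mulr0 => /eqP; rewrite eq_sym oner_eq0.
Qed.

Lemma pi_sigma_eps t : pi t = pi (sigma t * eps).
Proof.
have : pi (t - sigma t * eps) = 0 by apply/pi_ker; exists t.
by rewrite (additive_mapB piD) => /eqP; rewrite subr_eq0 => /eqP.
Qed.

Lemma circ0 l : circ 0 l = 0.
Proof. by rewrite -(additive_map0 piD) circE mulr0 mul0r. Qed.

Lemma circD l a b : circ (a + b) l = circ a l + circ b l.
Proof.
have [ta <-] := pi_surj a; have [tb <-] := pi_surj b.
by rewrite -piD !circE -piD mulrDr mulrDl.
Qed.

Lemma q_singularZ x l : q x = 0 -> q (rsc x l) = 0.
Proof. by move=> qx0; rewrite (qZ l (r := 0)) ?circ0 ?(additive_map0 rhoD). Qed.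

Lemma q0 : q 0 = 0.
Proof.
have f00 : f 0 0 = 0 by apply: (@additive_map0 _ _ (f^~ 0)) => a b; exact: fDl.
apply: (@addrI _ (q 0)); have := qD 0 0.
by rewrite addr0 f00 (additive_map0 piD) (additive_map0 rhoD) !addr0 => <-.
Qed.

(* If f(e, e) = c were nonzero, then q(e (1 + c^-1 k)) would be the class of k
   for every k, forcing q = 0. *)
Lemma singular_isotropic e : q e = 0 -> f e e = 0.
Proof.
move=> qe0; apply/eqP/negP => /negP /K_div c_unit.
have rho_pi0 k : rho (pi k) = 0.
  have := qD (rsc e 1) (rsc e ((f e e)^-1 * k)).
  rewrite /rsc -scalerDl -!/(rsc e _) !q_singularZ // fZ sigma1 mul1r.
  by rewrite mulrA mulrV // mul1r !add0r => <-.
case: q_nontriv => x; have [r <-] := rho_surj (q x).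
by have [t <-] := pi_surj r; rewrite rho_pi0.
Qed.

Variables (d : Order.disp_t) (I : orderType d) (E : I -> V).
Hypotheses (E_basis : is_basis E) (E_sing : forall i, q (E i) = 0).

Definition qlift (x : V) : Kbar := pi (gE sigma f E x x).

Lemma qlift_lincomb s c : uniq s -> qlift (lincomb E s c) = pi (trisum sigma f E s c c).
Proof. by move=> us; rewrite /qlift gE_lincomb. Qed.

Lemma qliftD x y : qlift (x + y) = qlift x + qlift y + pi (f x y).
Proof.
have [s [c [us ->]]] := basis_span x E_basis.
have [s' [c' [us' ->]]] := basis_span y E_basis.
have [u uu [su su']] := uniq_common_support s s'.
rewrite (lincomb_restrict E c us uu su) (lincomb_restrict E c' us' uu su') lincombD.
rewrite !qlift_lincomb // trisumD // -(pi_trisum_polar sigmaM sigma2 eps_invl fDl fDr fZ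
  f_herm piD pi_sigma_eps) => [|i]; last exact: singular_isotropic.
by rewrite -!piD.
Qed.

Lemma qliftZ x l : qlift (rsc x l) = circ (qlift x) l.
Proof.
have [s [c [us ->]]] := basis_span x E_basis.
by rewrite lincombZ !qlift_lincomb // circE trisumZ.
Qed.

Lemma rho_qlift x : rho (qlift x) = q x.
Proof.
have [s [c [_ ->]]] := basis_span x E_basis; elim: s => [|i s IHs].
  by rewrite qlift_lincomb // /trisum /lincomb !big_nil (additive_map0 piD)
    (additive_map0 rhoD) q0.
have qliftE : qlift (E i) = 0.
  have -> : E i = lincomb E [:: i] (fun=> 1) by rewrite /lincomb big_seq1 /rsc scale1r.
  by rewrite qlift_lincomb // /trisum big_seq1 big_cons ltxx big_nil (additive_map0 piD).
rewrite /lincomb big_cons -/(lincomb E s c) qliftD qD !rhoD IHs qliftZ qliftE circ0.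
by rewrite (additive_map0 rhoD) q_singularZ.
Qed.

Lemma qlift_quadratic :
  [/\ forall x y, qlift (x + y) = qlift x + qlift y + pi (f x y),
       forall x l, qlift (rsc x l) = circ (qlift x) l
     & forall x, rho (qlift x) = q x].
Proof. by split; [exact: qliftD | exact: qliftZ | exact: rho_qlift]. Qed.

End SingularBasis.

Section Projection.

Variables (K : unitRingType) (M : zmodType) (circ : M -> K -> M).
Variables (Rb Sb Tb : M -> Prop) (theta : M -> M).
Hypothesis circD : forall l a b, circ (a + b) l = circ a l + circ b l.
Hypotheses (Rb0 : Rb 0) (RbB : forall a b, Rb a -> Rb b -> Rb (a - b))
  (Rb_circ : forall a l, Rb a -> Rb (circ a l)).
Hypotheses (Sb0 : Sb 0) (SbB : forall a b, Sb a -> Sb b -> Sb (a - b))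
  (Sb_circ : forall a l, Sb a -> Sb (circ a l)).
Hypotheses (Tb0 : Tb 0) (TbB : forall a b, Tb a -> Tb b -> Tb (a - b))
  (Tb_circ : forall a l, Tb a -> Tb (circ a l)).
Hypotheses (ST0 : forall r, Sb r -> Tb r -> r = 0)
  (thetaP : forall r, Rb r -> Sb (theta r) /\ Tb (r - theta r)).

Lemma theta_unique r a : Rb r -> Sb a -> Tb (r - a) -> theta r = a.
Proof.
move=> Rr Sa Tra; have [Stheta Ttheta] := thetaP Rr.
apply/eqP; rewrite -subr_eq0; apply/eqP; apply: ST0; first exact: SbB.
have -> : theta r - a = (r - a) - (r - theta r) by rewrite opprB [RHS]addrC addrA subrK.
exact: TbB.
Qed.

Lemma theta0 : theta 0 = 0.
Proof. by apply: theta_unique; rewrite ?subrr. Qed.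

Lemma thetaD r1 r2 : Rb r1 -> Rb r2 -> theta (r1 + r2) = theta r1 + theta r2.
Proof.
move=> R1 R2; have [S1 T1] := thetaP R1; have [S2 T2] := thetaP R2.
apply: theta_unique; try exact: subgroupD.
by rewrite opprD addrACA; apply: subgroupD.
Qed.

Lemma theta_circ a l : Rb a -> theta (circ a l) = circ (theta a) l.
Proof.
move=> Ra; have [Sa Ta] := thetaP Ra.
apply: theta_unique; [exact: Rb_circ | exact: Sb_circ |].
by rewrite -(additive_mapB (circD l)); apply: Tb_circ.
Qed.

Section ChangeOfBasis.

Variables (V : lmodType K^c) (b : V -> V -> M) (L L' : V -> M).
Hypotheses (LD : forall x y, L (x + y) = L x + L y + b x y)
  (L'D : forall x y, L' (x + y) = L' x + L' y + b x y)
  (LZ : forall x l, L (rsc x l) = circ (L x) l)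
  (L'Z : forall x l, L' (rsc x l) = circ (L' x) l).
Hypothesis Rb_LL' : forall x, Rb (L x - L' x).
Variables (N : zmodType) (rhoT : M -> N).
Hypotheses (rhoTD : forall a b, rhoT (a + b) = rhoT a + rhoT b)
  (rhoT_T : forall r, Tb r -> rhoT r = 0).

Definition delta x := L x - L' x.

Definition Delta (p : V * M) : V * M := (p.1, theta (delta p.1) + p.2).

Lemma deltaD x y : delta (x + y) = delta x + delta y.
Proof. by rewrite /delta LD L'D opprD addrACA subrr addr0 opprD addrACA. Qed.

Lemma deltaZ x l : delta (rsc x l) = circ (delta x) l.
Proof. by rewrite /delta LZ L'Z (additive_mapB (circD l)). Qed.

Lemma delta0 : delta 0 = 0.
Proof. exact: additive_map0 deltaD. Qed.

Lemma theta_deltaD x y : theta (delta (x + y)) = theta (delta x) + theta (delta y).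
Proof. by rewrite deltaD thetaD //; apply: Rb_LL'. Qed.

Lemma theta_deltaZ x l : theta (delta (rsc x l)) = circ (theta (delta x)) l.
Proof. by rewrite deltaZ theta_circ //; apply: Rb_LL'. Qed.

Lemma Sb_theta_delta x : Sb (theta (delta x)).
Proof. exact: (thetaP (Rb_LL' x)).1. Qed.

Lemma rhoT_Delta p : rhoT (L p.1 + p.2) = rhoT (L' (Delta p).1 + (Delta p).2).
Proof.
apply/eqP; rewrite -subr_eq0 -(additive_mapB rhoTD); apply/eqP/rhoT_T.
have -> : L p.1 + p.2 - (L' p.1 + (theta (delta p.1) + p.2)) =
          delta p.1 - theta (delta p.1).
  by rewrite addrA opprD addrACA subrr addr0 opprD addrA.
exact: (thetaP (Rb_LL' p.1)).2.
Qed.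

Lemma Delta_change_of_basis :
  (forall p, Sb p.2 -> Sb (Delta p).2) /\
  (forall p p', Sb p.2 -> Sb p'.2 -> Delta p = Delta p' -> p = p') /\
  (forall p', Sb p'.2 -> exists p, Sb p.2 /\ Delta p = p') /\
  (forall p p', Sb p.2 -> Sb p'.2 ->
     Delta (p.1 + p'.1, p.2 + p'.2) =
     ((Delta p).1 + (Delta p').1, (Delta p).2 + (Delta p').2)) /\
  (forall p l, Sb p.2 ->
     Delta (rsc p.1 l, circ p.2 l) = (rsc (Delta p).1 l, circ (Delta p).2 l)) /\
  (forall r, Sb r -> Delta (0, r) = (0, r)) /\
  (forall p, Sb p.2 -> rhoT (L p.1 + p.2) = rhoT (L' (Delta p).1 + (Delta p).2)).
Proof.
split; first by move=> p Sp; apply: subgroupD => //; apply: Sb_theta_delta.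
split; first by move=> [x r] [x' r'] _ _ [/= <- /addrI ->].
split.
  move=> [x r] /= Sr; exists (x, r - theta (delta x)); split; first exact/SbB/Sb_theta_delta.
  by rewrite /Delta /= addrC subrK.
split; first by move=> [x r] [x' r'] _ _; rewrite /Delta /= theta_deltaD addrACA.
split; first by move=> [x r] l _; rewrite /Delta /= theta_deltaZ circD.
split; first by move=> r _; rewrite /Delta /= delta0 theta0 ?add0r.
by move=> p _; apply: rhoT_Delta.
Qed.

End ChangeOfBasis.

End Projection.

Theorem mainTheorem17
  (* K a division ring *)
  (K : unitRingType)
  (K_div : forall x : K, x != 0 -> x \is a GRing.unit)
  (* (σ, ε) admissible pair, σ an anti-automorphism *)
  (sigma : K -> K) (eps : K)
  (sigmaD : forall a b, sigma (a + b) = sigma a + sigma b)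
  (sigmaM : forall a b, sigma (a * b) = sigma b * sigma a)
  (sigma1 : sigma 1 = 1)
  (sigma_bij : bijective sigma)
  (eps_adm : sigma eps * eps = 1)
  (sigma2 : forall t, sigma (sigma t) = eps * t * eps^-1)
  (* Kbar = K / K_{σ,ε}, with quotient map pi *)
  (Kbar : zmodType) (pi : K -> Kbar)
  (piD : forall a b, pi (a + b) = pi a + pi b)
  (pi_surj : forall r, exists t, pi t = r)
  (pi_ker : forall t, pi t = 0 <-> exists u, t = u - sigma u * eps)
  (* the operation  t̄ ∘ λ = class(λ^σ t λ) *)
  (circ : Kbar -> K -> Kbar)
  (circE : forall t l, circ (pi t) l = pi (sigma l * t * l))
  (* Rbar : a ∘-stable subgroup of Kbar; Q = Kbar / Rbar with quotient map rho *)
  (Rb : Kbar -> Prop)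
  (Rb0 : Rb 0) (RbB : forall a b, Rb a -> Rb b -> Rb (a - b))
  (Rb_circ : forall a l, Rb a -> Rb (circ a l))
  (Q : zmodType) (rho : Kbar -> Q)
  (rhoD : forall a b, rho (a + b) = rho a + rho b)
  (rho_surj : forall z, exists r, rho r = z)
  (rho_ker : forall r, rho r = 0 <-> Rb r)
  (* V a right K-vector space *)
  (V : lmodType K^c)
  (* f trace-valued (σ,ε)-sesquilinear *)
  (f : V -> V -> K)
  (fDl : forall x y z, f (x + y) z = f x z + f y z)
  (fDr : forall x y z, f x (y + z) = f x y + f x z)
  (fZ : forall x y l m, f (rsc x l) (rsc y m) = sigma l * f x y * m)
  (f_herm : forall x y, f y x = sigma (f x y) * eps)
  (f_trace : forall x, exists t, f x x = t + sigma t * eps)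
  (* q a non-trivial generalized (σ,ε)-quadratic form with values in Kbar/Rbar *)
  (q : V -> Q)
  (qZ : forall x l r, q x = rho r -> q (rsc x l) = rho (circ r l))
  (qD : forall x y, q (x + y) = q x + q y + rho (pi (f x y)))
  (q_nontriv : exists x, q x <> 0)
  (* Rbar = Sbar ⊕ Tbar as K-vector spaces *)
  (Sb Tb : Kbar -> Prop)
  (Sb0 : Sb 0) (SbB : forall a b, Sb a -> Sb b -> Sb (a - b))
  (Sb_circ : forall a l, Sb a -> Sb (circ a l))
  (Tb0 : Tb 0) (TbB : forall a b, Tb a -> Tb b -> Tb (a - b))
  (Tb_circ : forall a l, Tb a -> Tb (circ a l))
  (RST : forall r, Rb r <-> exists s t, Sb s /\ Tb t /\ r = s + t)
  (ST0 : forall r, Sb r -> Tb r -> r = 0)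
  (* θ : Rbar -> Sbar the projection along Tbar *)
  (theta : Kbar -> Kbar)
  (thetaP : forall r, Rb r -> Sb (theta r) /\ Tb (r - theta r))
  (* QT = Kbar / Tbar with quotient map rhoT *)
  (QT : zmodType) (rhoT : Kbar -> QT)
  (rhoTD : forall a b, rhoT (a + b) = rhoT a + rhoT b)
  (rhoT_surj : forall z, exists r, rhoT r = z)
  (rhoT_ker : forall r, rhoT r = 0 <-> Tb r)
  (* E, E' bases of q-singular vectors indexed by a totally ordered set I *)
  (d : Order.disp_t) (I : orderType d) (E E' : I -> V)
  (E_basis : is_basis E) (E_sing : forall i, q (E i) = 0)
  (E'_basis : is_basis E') (E'_sing : forall i, q (E' i) = 0) :
  let Delta := DeltaEE sigma f pi theta E E' in
  (* Δ maps V^S into V^S *)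
  (forall p, Sb p.2 -> Sb (Delta p).2) /\
  (* bijective on V^S *)
  (forall p p', Sb p.2 -> Sb p'.2 -> Delta p = Delta p' -> p = p') /\
  (forall p', Sb p'.2 -> exists p, Sb p.2 /\ Delta p = p') /\
  (* K-linear: additive and compatible with (x + r)λ = xλ + r∘λ *)
  (forall p p', Sb p.2 -> Sb p'.2 ->
     Delta (p.1 + p'.1, p.2 + p'.2) =
     ((Delta p).1 + (Delta p').1, (Delta p).2 + (Delta p').2)) /\
  (forall p l, Sb p.2 ->
     Delta (rsc p.1 l, circ p.2 l) = (rsc (Delta p).1 l, circ (Delta p).2 l)) /\
  (* fixes Sbar elementwise *)
  (forall r, Sb r -> Delta (0, r) = (0, r)) /\
  (* q_E^{S,T} = q_E'^{S,T} ∘ Δ *)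
  (forall p, Sb p.2 ->
     qES sigma f pi rhoT E p = qES sigma f pi rhoT E' (Delta p)).
Proof.
move=> Delta.
have quadratic := qlift_quadratic K_div sigmaD sigmaM sigma1 eps_adm sigma2 piD
  pi_surj pi_ker circE rhoD rho_surj fDl fDr fZ f_herm qZ qD q_nontriv.
have [LD LZ rho_L] := quadratic _ _ E E_basis E_sing.
have [L'D L'Z rho_L'] := quadratic _ _ E' E'_basis E'_sing.
have Rb_LL' x : Rb (qlift sigma pi f E x - qlift sigma pi f E' x).
  by apply/rho_ker; rewrite (additive_mapB rhoD) rho_L rho_L' subrr.
exact: (Delta_change_of_basis (circD piD pi_surj circE) Rb0 RbB Rb_circ
  Sb0 SbB Sb_circ Tb0 TbB Tb_circ ST0 thetaP LD L'D LZ L'Z Rb_LL' rhoTD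
  (fun r => (rhoT_ker r).2)).
Qed.
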